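(* For a word $w=w_1\cdots w_n$ over $\{1,2,3\}$ let $s(w)=|\{i : 1\le i\le n-2,\ w_{i+2}-w_i=2\}|$ (the number of occurrences of the place-difference-value pattern $(12,(\mathbb{P},\{2\},\mathbb{P}),\{(1,2,\{2\})\},(\mathbb{P},\mathbb{P}))$). Then $$\sum_{w\in\{1,2,3\}^*} q^{|w|}z^{s(w)}=\frac{1}{\bigl(1-q^2(1-z)\bigr)\bigl(1-3q-q^2(z-1)\bigr)},$$ where the sum is over all finite words (including the empty word) and $|w|$ is the length of $w$. *)

From mathcomp Require Import all_boot all_order all_algebra.
Set Implicit Arguments. Unset Strict Implicit. Unset Printing Implicit Defensive.
Import Order.TTheory GRing.Theory Num.Theory.
Local Open Scope ring_scope.

(* A word over {1,2,3} is a sequence of elements of 'I_3; the element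
   i : 'I_3 stands for the letter i+1. *)
Definition letter (w : seq 'I_3) (i : nat) : nat := (nth ord0 w i).+1.

Definition s_stat (w : seq 'I_3) : nat :=
  count (fun i => ((letter w (i + 2))%:Z - (letter w i)%:Z == 2%:Z)%R)
        (iota 0 (size w - 2)).

(* Coefficient of q^n in the generating function: sum over words of length n
   of z^{s(w)}, as a polynomial in z with integer coefficients. *)
Definition gf_coeff (n : nat) : {poly int} :=
  \sum_(w : n.-tuple 'I_3) 'X^(s_stat w).

(* The denominator (1 - q^2 (1 - z)) (1 - 3q - q^2 (z - 1)),
   as a polynomial in q = 'X with coefficients in Z[z], z = 'X%:P. *)
Definition denom : {poly {poly int}} :=
  (1 - 'X^2 * (1 - ('X : {poly int})%:P)) *
  (1 - 3%:R * 'X - 'X^2 * (('X : {poly int}) - 1)%:P).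

From mathcomp Require Import all_boot all_order all_algebra.
From mathcomp Require Import zify ring.
Import GRing.Theory.
Local Open Scope ring_scope.

(* Prepending a letter x to a word w creates a new occurrence of the pattern
   exactly when x = 1 and the second letter of w is 3.  Hence the sums
   T, Q, P, R = gf_coeff_cond c0 c1 n for (c0, c1) = (false, false),
   (true, false), (false, true), (true, true) satisfy
     T_{n+1} = 3 T_n + (z-1) P_n,   P_{n+1} = 3 Q_n + (z-1) R_n,
     Q_{n+1} = T_n,                 R_{n+1} = Q_n.
   Eliminating P, Q, R gives
     T_{n+4} = 3 T_{n+3} + 3 (z-1) T_{n+1} + (z-1)^2 T_n,
   whose characteristic polynomial is the stated denominator; the first four
   coefficients are checked directly. *)

Section TupleBig.
Variables (R : Type) (idx : R) (op : Monoid.com_law idx) (T : finType).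

Lemma big_tuple_cons n (P : pred (n.+1.-tuple T)) (F : n.+1.-tuple T -> R) :
  \big[op/idx]_(w | P w) F w =
  \big[op/idx]_(x : T) \big[op/idx]_(w : n.-tuple T | P [tuple of x :: w])
    F [tuple of x :: w].
Proof.
rewrite pair_big_dep /=.
rewrite (reindex (fun p : T * n.-tuple T => [tuple of p.1 :: p.2])) //=.
exists (fun t : n.+1.-tuple T => (thead t, behead_tuple t)).
  by move=> [x t] _ /=; congr pair; apply: val_inj.
by move=> t _; rewrite [RHS]tuple_eta.
Qed.

Lemma big_tuple0 (P : pred (0.-tuple T)) (F : 0.-tuple T -> R) :
  \big[op/idx]_(w | P w) F w = if P [tuple] then F [tuple] else idx.
Proof.
rewrite big_mkcond (big_pred1 [tuple]) // => w.
by apply/esym/eqP/val_inj; case: w => -[].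
Qed.

End TupleBig.

Definition occurs_at (w : seq 'I_3) (i : nat) : bool :=
  (nth ord0 w i == ord0) && (nth ord0 w i.+2 == ord_max).

(* The letters live in {1,2,3}, so a difference of 2 forces the pair (1,3). *)
Lemma s_stat_occurs_at w i :
  ((letter w (i + 2))%:Z - (letter w i)%:Z == 2%:Z) = occurs_at w i.
Proof.
rewrite /letter /occurs_at subr_eq -PoszD eqz_nat addn2.
by case: (nth ord0 w i) => -[|[|[|]]] //= ?; case: (nth ord0 w i.+2) => -[|[|[|]]].
Qed.

(* Positions past the end never match, because [nth] defaults to [ord0]. *)
Lemma s_stat_iota w N : (size w <= N + 2)%N ->
  s_stat w = count (occurs_at w) (iota 0 N).
Proof.
move=> le_w_N; rewrite /s_stat (eq_count (s_stat_occurs_at w)).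
have -> : N = (size w - 2 + (N - (size w - 2)))%N by lia.
rewrite iotaD count_cat -[LHS]addn0; congr addn.
apply/esym/eqP; rewrite -leqn0 leqNgt -has_count.
apply/hasPn => i; rewrite mem_iota add0n => /andP[le_i _].
by rewrite /occurs_at (nth_default ord0 (_ : size w <= i.+2)%N) ?andbF //; lia.
Qed.

Lemma s_stat_cons x w :
  s_stat (x :: w) = (s_stat w + ((x == ord0) && (nth ord0 w 1 == ord_max)))%N.
Proof.
rewrite (@s_stat_iota w (size w)) ?leq_addr //.
rewrite (@s_stat_iota (x :: w) (size w).+1) ?leq_addr //.
by rewrite [iota 0 _]/= (iotaDl 1 0) /= count_map addnC.
Qed.

Definition gf_coeff_cond (c0 c1 : bool) (n : nat) : {poly int} :=
  \sum_(w : n.-tuple 'I_3 | (c0 ==> (nth ord0 w 0 == ord_max))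
                           && (c1 ==> (nth ord0 w 1 == ord_max))) 'X^(s_stat w).

Lemma gf_coeffE n : gf_coeff n = gf_coeff_cond false false n.
Proof. by []. Qed.

Lemma gf_coeff_cond0 c0 c1 : gf_coeff_cond c0 c1 0 = (~~ c0 && ~~ c1)%:R.
Proof. by rewrite /gf_coeff_cond big_tuple0 /=; case: c0; case: c1. Qed.

Lemma expr_bool (R : pzRingType) (x : R) (b : bool) : x ^+ b = 1 + b%:R * (x - 1).
Proof. by case: b; rewrite ?expr1 ?expr0 ?mul1r ?mul0r ?addr0 // addrC subrK. Qed.

Lemma gf_coeff_cond_cons c1 n x :
  \sum_(w : n.-tuple 'I_3 | c1 ==> (nth ord0 w 0 == ord_max)) 'X^(s_stat (x :: w)) =
  gf_coeff_cond c1 false n + (x == ord0)%:R * ('X - 1) * gf_coeff_cond c1 true n.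
Proof.
rewrite /gf_coeff_cond /= mulr_sumr [in X in _ + X]big_mkcondr /=.
rewrite (eq_bigl _ _ (fun w => andbT _)).
rewrite -big_split /=; apply: eq_bigr => w _.
rewrite s_stat_cons exprD expr_bool.
by case: (x == ord0); case: (nth ord0 w 1 == ord_max) => /=; ring.
Qed.

Lemma gf_coeff_cond_rec c0 c1 n :
  gf_coeff_cond c0 c1 n.+1 =
  (if c0 then 1 else 3%:R) * gf_coeff_cond c1 false n
  + (if c0 then 0 else 'X - 1) * gf_coeff_cond c1 true n.
Proof.
rewrite {1}/gf_coeff_cond big_tuple_cons !big_ord_recl big_ord0 /=.
by case: c0; rewrite /= ?big_pred0_eq !gf_coeff_cond_cons /=; ring.
Qed.

Lemma gf_coeff_rec n :
  gf_coeff n.+4 = 3%:R * gf_coeff n.+3 + 3%:R * ('X - 1) * gf_coeff n.+1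
                  + ('X - 1) ^+ 2 * gf_coeff n.
Proof.
rewrite !gf_coeffE (gf_coeff_cond_rec false false n.+3).
rewrite (gf_coeff_cond_rec false true n.+2).
rewrite (gf_coeff_cond_rec true false n.+1) (gf_coeff_cond_rec true true n.+1).
by rewrite (gf_coeff_cond_rec true false n) /=; ring.
Qed.

Lemma denom_coef k :
  denom`_k = [:: 1; - 3%:R; 0; 3%:R * (1 - 'X); - (1 - 'X) ^+ 2]`_k.
Proof.
have -> : denom = 1 - 3%:R *: 'X + (3%:R * (1 - 'X)) *: 'X^3 - (1 - 'X) ^+ 2 *: 'X^4.
  by rewrite /denom -!mul_polyC; ring.
rewrite !coefB !coefD coefN !coefZ coef1 coefX !coefXn.
by case: k => [|[|[|[|[|k]]]]] /=;
  rewrite ?mulr0 ?mulr1 ?subr0 ?add0r ?addr0 ?sub0r ?nth_nil.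
Qed.

Theorem mainTheorem3 (n : nat) :
  \sum_(k < n.+1) denom`_k * gf_coeff (n - k) = (n == 0%N)%:R.
Proof.
case: n => [|[|[|[|n]]]]; last first.
  rewrite 5!big_ord_recl big1 => [|k _]; last by rewrite denom_coef nth_default ?mul0r.
  by rewrite !denom_coef /= !subSS !subn0 gf_coeff_rec; ring.
all: rewrite !big_ord_recl big_ord0 !denom_coef /= /bump /= ?addn0 ?add1n ?subSS ?subn0.
all: by rewrite !gf_coeffE ?gf_coeff_cond_rec !gf_coeff_cond0 /=; ring.
Qed.
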